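(* Let $(\mathscr{A},{}^{\vee},\varpi)$ be an abelian category with duality in which $2$ is invertible, and let $\mathscr{B}\subseteq\mathscr{A}$ be a full subcategory which is closed under subobjects, quotient objects and finite products in $\mathscr{A}$ and closed under duality ($B\in\mathscr{B}\Rightarrow B^{\vee}\in\mathscr{B}$). Assume that every object of $\mathscr{A}$ has a finite $\mathscr{B}$-filtration and that $\mathscr{A}$ is noetherian. Then: (1) For every object $0\neq M$ of $\mathscr{A}$ there is a unique maximal subobject $\mathfrak{m}(M)\subseteq M$ lying in $\mathscr{B}$, and $\mathfrak{m}(M)\neq 0$; if $M=0$ set $\mathfrak{m}(M)=0$. (2) Let $(M,\varphi)$ be a hermitian space in $\mathscr{A}$ and put $\mathfrak{s}(M)=\mathfrak{m}(M)\cap\mathfrak{m}(M)^{\perp}\subseteq M$. Then $\mathfrak{s}(M)=0$ if and only if $M\in\mathscr{B}$.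
   Context: An abelian category with duality $(\mathscr{A},{}^{\vee},\varpi)$ consists of an abelian category $\mathscr{A}$, an exact contravariant functor ${}^{\vee}:\mathscr{A}^{op}\to\mathscr{A}$ and a natural isomorphism $\varpi:1_{\mathscr{A}}\to {}^{\vee\vee}$. ''$2$ is invertible'' means multiplication by $2$ is surjective on all Hom groups. Objects of $\mathscr{A}$ are called $\mathscr{A}$-modules; a subobject is given by a monomorphism. A $\mathscr{B}$-filtration of an object $N$ is a finite chain of subobjects $0=N_0\subseteq N_1\subseteq\cdots\subseteq N_r=N$ with $N_i/N_{i-1}\in\mathscr{B}$ for all $i$. $\mathscr{A}$ is noetherian if every ascending chain of subobjects of every object stabilizes. A hermitian (symmetric) space is a pair $(M,\varphi)$ with $\varphi:M\to M^{\vee}$ an isomorphism which is symmetric with respect to $\varpi$ (i.e. $\varphi=\varphi^{\vee}\circ\varpi_M$). For a subobject $\mathfrak{i}:L\hookrightarrow M$ of a hermitian space, $L^{\perp}:=\ker(\mathfrak{i}^{\vee}\varphi)\subseteq M$. *)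

From HB Require Import structures.
From mathcomp Require Import all_boot all_algebra.
Set Implicit Arguments. Unset Strict Implicit. Unset Printing Implicit Defensive.
Import GRing.Theory.
Local Open Scope ring_scope.

Record precat := PreCat {
  Obj :> Type;
  Mor : Obj -> Obj -> zmodType;
  mcomp : forall A B D : Obj, Mor B D -> Mor A B -> Mor A D;
  idm : forall A : Obj, Mor A A }.
Arguments mcomp {p A B D}.
Arguments idm {p}.

Section Cat.
Variable C : precat.

Definition preadditive : Prop :=
  (forall (A B D E : C) (f : Mor A B) (g : Mor B D) (h : Mor D E),
      mcomp h (mcomp g f) = mcomp (mcomp h g) f) /\
  (forall (A B : C) (f : Mor A B), mcomp (idm B) f = f /\ mcomp f (idm A) = f) /\
  (forall (A B D : C) (g : Mor B D) (f1 f2 : Mor A B),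
      mcomp g (f1 + f2) = mcomp g f1 + mcomp g f2) /\
  (forall (A B D : C) (g1 g2 : Mor B D) (f : Mor A B),
      mcomp (g1 + g2) f = mcomp g1 f + mcomp g2 f).

Definition mono (A B : C) (f : Mor A B) : Prop :=
  forall (X : C) (g h : Mor X A), mcomp f g = mcomp f h -> g = h.
Definition epi (A B : C) (f : Mor A B) : Prop :=
  forall (X : C) (g h : Mor B X), mcomp g f = mcomp h f -> g = h.
Definition is_iso (A B : C) (f : Mor A B) : Prop :=
  exists g : Mor B A, mcomp g f = idm A /\ mcomp f g = idm B.

Definition is_zero (Z : C) : Prop :=
  forall A : C, (forall f : Mor Z A, f = 0) /\ (forall f : Mor A Z, f = 0).

Definition is_kernel (A B K : C) (f : Mor A B) (k : Mor K A) : Prop :=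
  mcomp f k = 0 /\
  forall (X : C) (g : Mor X A), mcomp f g = 0 -> exists! u : Mor X K, mcomp k u = g.

Definition is_cokernel (A B Q : C) (f : Mor A B) (q : Mor B Q) : Prop :=
  mcomp q f = 0 /\
  forall (X : C) (g : Mor B X), mcomp g f = 0 -> exists! u : Mor Q X, mcomp u q = g.

Definition is_biproduct (A B P : C) (p1 : Mor P A) (p2 : Mor P B)
    (i1 : Mor A P) (i2 : Mor B P) : Prop :=
  mcomp p1 i1 = idm A /\ mcomp p2 i2 = idm B /\ mcomp p1 i2 = 0 /\ mcomp p2 i1 = 0 /\
  mcomp i1 p1 + mcomp i2 p2 = idm P.

Definition is_pullback (A B M S : C) (f : Mor A M) (g : Mor B M)
    (a : Mor S A) (b : Mor S B) : Prop :=
  mcomp f a = mcomp g b /\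
  forall (X : C) (x : Mor X A) (y : Mor X B), mcomp f x = mcomp g y ->
    exists! u : Mor X S, mcomp a u = x /\ mcomp b u = y.

Definition abelian : Prop :=
  preadditive /\
  (exists Z : C, is_zero Z) /\
  (forall A B : C, exists (P : C) (p1 : Mor P A) (p2 : Mor P B)
      (i1 : Mor A P) (i2 : Mor B P), is_biproduct p1 p2 i1 i2) /\
  (forall (A B : C) (f : Mor A B), exists (K : C) (k : Mor K A), is_kernel f k) /\
  (forall (A B : C) (f : Mor A B), exists (Q : C) (q : Mor B Q), is_cokernel f q) /\
  (forall (A B : C) (f : Mor A B), mono f ->
      exists (Q : C) (q : Mor B Q), is_kernel q f) /\
  (forall (A B : C) (f : Mor A B), epi f ->
      exists (K : C) (k : Mor K A), is_cokernel k f).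

Definition two_invertible : Prop :=
  forall (A B : C) (f : Mor A B), exists g : Mor A B, g *+ 2 = f.

Definition sub_le (L L' M : C) (i : Mor L M) (j : Mor L' M) : Prop :=
  exists u : Mor L L', mcomp j u = i.

Definition noetherian : Prop :=
  forall (M : C) (L : nat -> C) (s : forall n, Mor (L n) M),
    (forall n, mono (s n)) -> (forall n, sub_le (s n) (s n.+1)) ->
    exists N : nat, forall n, (N <= n)%N -> sub_le (s n.+1) (s n).

Definition short_exact (A B E : C) (f : Mor A B) (g : Mor B E) : Prop :=
  is_kernel g f /\ is_cokernel f g.

Record duality := Duality {
  dobj : C -> C;
  dhom : forall A B : C, Mor A B -> Mor (dobj B) (dobj A);
  dnat : forall A : C, Mor A (dobj (dobj A)) }.

Definition is_duality (d : duality) : Prop :=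
  (forall A : C, dhom d (idm A) = idm (dobj d A)) /\
  (forall (A B D : C) (f : Mor A B) (g : Mor B D),
      dhom d (mcomp g f) = mcomp (dhom d f) (dhom d g)) /\
  (forall (A B : C) (f g : Mor A B), dhom d (f + g) = dhom d f + dhom d g) /\
  (forall (A B E : C) (f : Mor A B) (g : Mor B E),
      short_exact f g -> short_exact (dhom d g) (dhom d f)) /\
  (forall A : C, is_iso (dnat d A)) /\
  (forall (A B : C) (f : Mor A B),
      mcomp (dhom d (dhom d f)) (dnat d A) = mcomp (dnat d B) f).

(* B full subcategory closed under subobjects, quotients, finite products
   (including the empty product = zero objects) and duality *)
Definition B_closed (d : duality) (PB : C -> Prop) : Prop :=
  (forall (L M : C) (i : Mor L M), mono i -> PB M -> PB L) /\
  (forall (M Q : C) (q : Mor M Q), epi q -> PB M -> PB Q) /\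
  (forall Z : C, is_zero Z -> PB Z) /\
  (forall (A B P : C) (p1 : Mor P A) (p2 : Mor P B) (i1 : Mor A P) (i2 : Mor B P),
      is_biproduct p1 p2 i1 i2 -> PB A -> PB B -> PB P) /\
  (forall A : C, PB A -> PB (dobj d A)).

Definition has_B_filtration (PB : C -> Prop) (N : C) : Prop :=
  exists (r : nat) (F : nat -> C) (j : forall i, Mor (F i) (F i.+1)),
    is_zero (F 0%N) /\
    (exists e : Mor (F r) N, is_iso e) /\
    forall i, (i < r)%N ->
      mono (j i) /\ exists (Q : C) (q : Mor (F i.+1) Q), is_cokernel (j i) q /\ PB Q.

Definition hermitian_space (d : duality) (M : C) (phi : Mor M (dobj d M)) : Prop :=
  is_iso phi /\ phi = mcomp (dhom d phi) (dnat d M).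

Definition maxB (PB : C -> Prop) (L M : C) (m : Mor L M) : Prop :=
  mono m /\ PB L /\
  forall (L' : C) (i : Mor L' M), mono i -> PB L' -> sub_le m i -> sub_le i m.

End Cat.

From mathcomp Require Import all_boot all_algebra.
From Stdlib Require Import Classical ClassicalEpsilon.
Set Implicit Arguments. Unset Strict Implicit. Unset Printing Implicit Defensive.
Import GRing.Theory.
Local Open Scope ring_scope.

(* For two subobjects L, L' of M lying in B, the image of L (+) L' -> M lies in B
   and contains both; hence a maximal B-subobject m(M), which exists because A is
   noetherian, is unique, and it is nonzero because the first nonzero step of a
   B-filtration of M is a nonzero B-subobject.
   For (2) put f = m^v phi : M -> L^v, so that L^perp = ker f and s(M) = ker (f m).
   If s(M) = 0, then f m is mono, and for a B-subobject N of L^perp the map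
   L (+) N -> M is a B-subobject containing m(M); maximality forces N = 0.  Thus
   L^perp = 0, so m^v is mono, m is epi and M is a quotient of L, hence in B.
   Conversely, if M is in B then m is split epi, m^v is mono, L^perp = 0 and so
   s(M) = 0. *)

Lemma additive_fun0 (U V : zmodType) (F : U -> V) :
  {morph F : x y / x + y} -> F 0 = 0.
Proof. by move=> FD; apply: (addrI (F 0)); rewrite -FD !addr0. Qed.

Lemma additive_funB (U V : zmodType) (F : U -> V) :
  {morph F : x y / x + y} -> {morph F : x y / x - y}.
Proof. by move=> FD x y; apply: (addIr (F y)); rewrite -FD !subrK. Qed.

Section Preadditive.

Variable C : precat.
Hypothesis pre : preadditive C.

Lemma mcompA (A B D E : C) (f : Mor A B) (g : Mor B D) (h : Mor D E) :
  mcomp h (mcomp g f) = mcomp (mcomp h g) f.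
Proof. by case: pre => compA _; apply: compA. Qed.

Lemma mcomp1l (A B : C) (f : Mor A B) : mcomp (idm B) f = f.
Proof. by case: pre => _ [comp1 _]; case: (comp1 _ _ f). Qed.

Lemma mcomp1r (A B : C) (f : Mor A B) : mcomp f (idm A) = f.
Proof. by case: pre => _ [comp1 _]; case: (comp1 _ _ f). Qed.

Lemma mcompDr (A B D : C) (g : Mor B D) : {morph @mcomp C A B D g : f1 f2 / f1 + f2}.
Proof. by case: pre => _ [_ [compD _]]; apply: compD. Qed.

Lemma mcompDl (A B D : C) (g1 g2 : Mor B D) (f : Mor A B) :
  mcomp (g1 + g2) f = mcomp g1 f + mcomp g2 f.
Proof. by case: pre => _ [_ [_ compD]]; apply: compD. Qed.

Lemma mcomp0r (A B D : C) (g : Mor B D) : mcomp g (0 : Mor A B) = 0.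
Proof. exact: additive_fun0 (mcompDr g). Qed.

Lemma mcomp0l (A B D : C) (f : Mor A B) : mcomp (0 : Mor B D) f = 0.
Proof. exact: (@additive_fun0 _ _ (mcomp^~ f) (fun g1 g2 => mcompDl g1 g2 f)). Qed.

Lemma mcompBr (A B D : C) (g : Mor B D) : {morph @mcomp C A B D g : f1 f2 / f1 - f2}.
Proof. exact: (additive_funB (mcompDr g)). Qed.

Lemma mcompBl (A B D : C) (g1 g2 : Mor B D) (f : Mor A B) :
  mcomp (g1 - g2) f = mcomp g1 f - mcomp g2 f.
Proof. exact: (@additive_funB _ _ (mcomp^~ f) (fun g1 g2 => mcompDl g1 g2 f)). Qed.

Lemma monoP (A B : C) (f : Mor A B) :
  mono f <-> forall (X : C) (g : Mor X A), mcomp f g = 0 -> g = 0.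
Proof.
split=> [f_mono X g fg0 | f0 X g h fgh].
  by apply: f_mono; rewrite fg0 mcomp0r.
by apply/eqP; rewrite -subr_eq0; apply/eqP/f0; rewrite mcompBr fgh subrr.
Qed.

Lemma mono_eq0 (A B X : C) (f : Mor A B) (g : Mor X A) :
  mono f -> mcomp f g = 0 -> g = 0.
Proof. by move/monoP; apply. Qed.

Lemma epiP (A B : C) (f : Mor A B) :
  epi f <-> forall (X : C) (g : Mor B X), mcomp g f = 0 -> g = 0.
Proof.
split=> [f_epi X g gf0 | f0 X g h gfh].
  by apply: f_epi; rewrite gf0 mcomp0l.
by apply/eqP; rewrite -subr_eq0; apply/eqP/f0; rewrite mcompBl gfh subrr.
Qed.

Lemma mor_from_zero (Z A : C) (f : Mor Z A) : is_zero Z -> f = 0.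
Proof. by move=> Z0; case: (Z0 A) => + _; apply. Qed.

Lemma mor_to_zero (Z A : C) (f : Mor A Z) : is_zero Z -> f = 0.
Proof. by move=> Z0; case: (Z0 A) => _; apply. Qed.

Lemma idm_eq0_zero (A : C) : idm A = 0 -> is_zero A.
Proof.
move=> id0 X; split=> f; first by rewrite -(mcomp1r f) id0 mcomp0r.
by rewrite -(mcomp1l f) id0 mcomp0l.
Qed.

Lemma mono_eq0_zero (A B : C) (f : Mor A B) : mono f -> f = 0 -> is_zero A.
Proof. by move=> f_mono f0; apply/idm_eq0_zero/f_mono; rewrite mcomp1r mcomp0r. Qed.

Lemma mono_retraction (A B : C) (s : Mor A B) (r : Mor B A) :
  mcomp r s = idm A -> mono s.
Proof. by move=> rs X g h sgh; rewrite -(mcomp1l g) -(mcomp1l h) -rs -!mcompA sgh. Qed.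

Lemma epi_section (A B : C) (q : Mor A B) (s : Mor B A) :
  mcomp q s = idm B -> epi q.
Proof. by move=> qs X g h gqh; rewrite -(mcomp1r g) -(mcomp1r h) -qs !mcompA gqh. Qed.

Lemma iso_mono (A B : C) (f : Mor A B) : is_iso f -> mono f.
Proof. by case=> g [gf _]; apply: mono_retraction gf. Qed.

Lemma mono_idm (A : C) : mono (idm A).
Proof. by apply: (@mono_retraction _ _ _ (idm A)); rewrite mcomp1l. Qed.

Lemma mono_comp (A B D : C) (f : Mor A B) (g : Mor B D) :
  mono g -> mono f -> mono (mcomp g f).
Proof. by move=> g_mono f_mono X x y e; apply/f_mono/g_mono; rewrite !mcompA. Qed.

Lemma mono_comp_iso (A B D : C) (phi : Mor A B) (g : Mor B D) :
  is_iso phi -> mono (mcomp g phi) -> mono g.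
Proof.
case=> psi [_ phipsi] gphi_mono X x y gxy.
have psixy : mcomp psi x = mcomp psi y.
  by apply: gphi_mono; rewrite !mcompA -!(mcompA psi phi g) phipsi !mcomp1r.
by rewrite -(mcomp1l x) -(mcomp1l y) -phipsi -!mcompA psixy.
Qed.

Lemma kernel_mono (A B K : C) (f : Mor A B) (k : Mor K A) : is_kernel f k -> mono k.
Proof.
case=> fk0 k_univ X g h kgh.
have [|u [_ u_uniq]] := k_univ X (mcomp k g); first by rewrite mcompA fk0 mcomp0l.
by rewrite -(u_uniq g) // (u_uniq h).
Qed.

Lemma kernel_zero_mono (A B K : C) (f : Mor A B) (k : Mor K A) :
  is_kernel f k -> is_zero K -> mono f.
Proof.
case=> _ k_univ K0; apply/monoP=> X g fg0.
by have [u [<- _]] := k_univ X g fg0; rewrite (mor_to_zero u K0) mcomp0r.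
Qed.

Lemma pullback_kernel_zero_mono (A L M P S : C) (f : Mor M A) (m : Mor L M)
    (k : Mor P M) (a : Mor S L) (b : Mor S P) :
  is_kernel f k -> is_pullback m k a b -> is_zero S -> mono (mcomp f m).
Proof.
case=> _ k_univ [_ pb_univ] S0; apply/monoP=> X g fmg0.
have [y [ky _]] := k_univ X (mcomp m g) (etrans (mcompA _ _ _) fmg0).
have [u [[<- _] _]] := pb_univ X g y (esym ky).
by rewrite (mor_to_zero u S0) mcomp0r.
Qed.

Lemma pullback_zero (L M P S : C) (m : Mor L M) (k : Mor P M)
    (a : Mor S L) (b : Mor S P) :
  mono m -> is_zero P -> is_pullback m k a b -> is_zero S.
Proof.
move=> m_mono P0 [makb pb_univ].
have b0 : b = 0 by apply: mor_to_zero P0.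
have a0 : a = 0 by apply: mono_eq0 m_mono _; rewrite makb b0 mcomp0r.
apply: idm_eq0_zero; have [v [_ v_uniq]] := pb_univ S a b makb.
rewrite -(v_uniq (idm S)) ?mcomp1r //; apply: v_uniq.
by rewrite a0 b0 !mcomp0r.
Qed.

Lemma sub_le_refl (L M : C) (i : Mor L M) : sub_le i i.
Proof. by exists (idm L); rewrite mcomp1r. Qed.

Lemma sub_le_trans (A B D M : C) (i : Mor A M) (j : Mor B M) (k : Mor D M) :
  sub_le i j -> sub_le j k -> sub_le i k.
Proof. by case=> u <- [v <-]; exists (mcomp v u); rewrite mcompA. Qed.

Section Duality.

Variable d : duality C.
Hypothesis dual : is_duality d.

Lemma dhom_idm (A : C) : dhom d (idm A) = idm (dobj d A).
Proof. by case: dual => dhom1 _; apply: dhom1. Qed.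

Lemma dhom_comp (A B D : C) (f : Mor A B) (g : Mor B D) :
  dhom d (mcomp g f) = mcomp (dhom d f) (dhom d g).
Proof. by case: dual => _ [dhomM _]; apply: dhomM. Qed.

Lemma dhom0 (A B : C) : dhom d (0 : Mor A B) = 0.
Proof. by case: dual => _ [_ [dhomD _]]; apply: additive_fun0 (dhomD A B). Qed.

Lemma split_epi_dhom_mono (A B : C) (m : Mor A B) (u : Mor B A) :
  mcomp m u = idm B -> mono (dhom d m).
Proof.
by move=> mu; apply: (@mono_retraction _ _ _ (dhom d u)); rewrite -dhom_comp mu dhom_idm.
Qed.

Section BSubobjects.

Variable PB : C -> Prop.
Hypothesis PBcl : B_closed d PB.

Lemma B_quotient (M Q : C) (q : Mor M Q) : epi q -> PB M -> PB Q.
Proof. by case: PBcl => _ [PBquo _]; apply: PBquo. Qed.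

Lemma B_biproduct (A B P : C) (p1 : Mor P A) (p2 : Mor P B) (i1 : Mor A P) (i2 : Mor B P) :
  is_biproduct p1 p2 i1 i2 -> PB A -> PB B -> PB P.
Proof. by case: PBcl => _ [_ [_ [PBprod _]]]; apply: PBprod. Qed.

Lemma B_filtration_nonzero_sub (N : C) :
  has_B_filtration PB N -> ~ is_zero N ->
  exists (X : C) (x : Mor X N), mono x /\ PB X /\ ~ is_zero X.
Proof.
case=> r [F [j [F0_zero [[e e_iso] F_steps]]]] N_nz.
suff [X [x [x_mono [PX X_nz]]]] :
    exists (X : C) (x : Mor X (F r)), mono x /\ PB X /\ ~ is_zero X.
  by exists X, (mcomp e x); split=> //; apply: mono_comp (iso_mono e_iso) x_mono.
have Fr_nz : ~ is_zero (F r).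
  move=> Fr0; apply/N_nz/idm_eq0_zero; case: e_iso => g [_ <-].
  by rewrite (mor_to_zero g Fr0) mcomp0r.
elim: {-2}r (leqnn r) Fr_nz => [|n IHn] n_lt_r Fn_nz; first by [].
have [j_mono [Q [q [q_coker PQ]]]] := F_steps n n_lt_r.
case: (classic (is_zero (F n))) => [Fn0 | /(IHn (ltnW n_lt_r))]; last first.
  case=> X [x [x_mono [PX X_nz]]].
  by exists X, (mcomp (j n) x); split=> //; apply: mono_comp.
(* F n = 0: the identity of F n.+1 factors through q, so F n.+1 is a quotient of Q. *)
have [|u [uq _]] := q_coker.2 _ (idm (F n.+1)).
  by rewrite mcomp1l (mor_from_zero (j n) Fn0).
exists (F n.+1), (idm (F n.+1)); split; first exact: mono_idm.
by split=> //; apply: B_quotient (epi_section uq) PQ.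
Qed.

Record Bsub_above (M N0 : C) (n0 : Mor N0 M) := BsubAbove {
  bs_obj : C;
  bs_mor : Mor bs_obj M;
  bs_spec : mono bs_mor /\ PB bs_obj /\ sub_le n0 bs_mor }.

Lemma maxB_exists (M N0 : C) (n0 : Mor N0 M) :
  noetherian C -> mono n0 -> PB N0 ->
  exists (L : C) (m : Mor L M), maxB PB m /\ sub_le n0 m.
Proof.
move=> noeth n0_mono PN0; apply: NNPP => no_max.
have grow (t : Bsub_above n0) : exists t' : Bsub_above n0,
    sub_le (bs_mor t) (bs_mor t') /\ ~ sub_le (bs_mor t') (bs_mor t).
  case: t => L m [m_mono [PL n0m]] /=; apply: NNPP => t_max; apply: no_max.
  exists L, m; do 3!split=> //; move=> L' i i_mono PL' mi.
  apply: NNPP => not_im; apply: t_max.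
  by exists (BsubAbove (conj i_mono (conj PL' (sub_le_trans n0m mi)))).
have [next next_grows] := choice _ grow.
pose t0 := BsubAbove (conj n0_mono (conj PN0 (sub_le_refl n0))).
pose chain n := iter n next t0.
have [K chain_stable] := noeth M _ (fun n => bs_mor (chain n))
  (fun n => (bs_spec (chain n)).1) (fun n => (next_grows (chain n)).1).
exact: (next_grows (chain K)).2 (chain_stable K (leqnn K)).
Qed.

Section Abelian.

Hypothesis has_kernels :
  forall (A B : C) (f : Mor A B), exists (K : C) (k : Mor K A), is_kernel f k.
Hypothesis has_cokernels :
  forall (A B : C) (f : Mor A B), exists (Q : C) (q : Mor B Q), is_cokernel f q.
Hypothesis mono_is_kernel :
  forall (A B : C) (f : Mor A B), mono f -> exists (Q : C) (q : Mor B Q), is_kernel q f.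
Hypothesis has_biproducts :
  forall A B : C, exists (P : C) (p1 : Mor P A) (p2 : Mor P B) (i1 : Mor A P) (i2 : Mor B P),
    is_biproduct p1 p2 i1 i2.

(* The cokernel q of f has q^v = 0 since f^v is mono, and then q = 0 because varpi
   is natural and invertible. *)
Lemma dual_mono_epi (A B : C) (f : Mor A B) : mono (dhom d f) -> epi f.
Proof.
move=> df_mono; have [Q [q [qf0 q_univ]]] := has_cokernels f.
case: dual => _ [_ [_ [_ [dnat_iso dnat_natural]]]].
have dq0 : dhom d q = 0 by apply: mono_eq0 df_mono _; rewrite -dhom_comp qf0 dhom0.
have q0 : q = 0.
  apply: mono_eq0 (iso_mono (dnat_iso Q)) _.
  by rewrite -dnat_natural dq0 dhom0 mcomp0l.
apply/epiP=> X g gf0; have [u [<- _]] := q_univ X g gf0.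
by rewrite q0 mcomp0r.
Qed.

Lemma epi_mono_factorization (A M : C) (f : Mor A M) :
  exists (I : C) (e : Mor A I) (k : Mor I M), epi e /\ mono k /\ mcomp k e = f.
Proof.
have [Q [q q_coker]] := has_cokernels f; have [I [k k_ker]] := has_kernels q.
have k_mono := kernel_mono k_ker; case: (k_ker) => qk0 k_univ.
have [e [ke _]] := k_univ _ f q_coker.1.
(* If g e = 0, the mono k (ker g) is the kernel of some r; as r kills f it kills k,
   so k factors through k (ker g), ker g is split epi and g = 0. *)
exists I, e, k; split=> //; apply/epiP=> X g ge0.
have [K [m0 m0_ker]] := has_kernels g; case: (m0_ker) => gm0 m0_univ.
have [e' [m0e' _]] := m0_univ _ e ge0.
have [R [r [rkm0 r_univ]]] := mono_is_kernel (mono_comp k_mono (kernel_mono m0_ker)).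
have rf0 : mcomp r f = 0.
  by rewrite -ke -m0e' (mcompA e' m0 k) (mcompA e' _ r) rkm0 mcomp0l.
have [t [tq _]] := q_coker.2 _ r rf0.
have rk0 : mcomp r k = 0 by rewrite -tq -mcompA qk0 mcomp0r.
have [v [kv _]] := r_univ _ k rk0.
have m0v : mcomp m0 v = idm I by apply: k_mono; rewrite mcomp1r mcompA.
by rewrite -(mcomp1r g) -m0v mcompA gm0 mcomp0l.
Qed.

Lemma B_join (L L' M : C) (m : Mor L M) (m' : Mor L' M) :
  PB L -> PB L' ->
  exists (I : C) (s : Mor I M), mono s /\ PB I /\ sub_le m s /\ sub_le m' s.
Proof.
move=> PL PL'; have [P [p1 [p2 [i1 [i2 P_bip]]]]] := has_biproducts L L'.
case: (P_bip) => p1i1 [p2i2 [p1i2 [p2i1 _]]].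
have [I [e [s [e_epi [s_mono se]]]]] := epi_mono_factorization (mcomp m p1 + mcomp m' p2).
exists I, s; split=> //; split; first exact: B_quotient e_epi (B_biproduct P_bip PL PL').
split; [exists (mcomp e i1) | exists (mcomp e i2)];
  by rewrite mcompA se mcompDl -!mcompA ?p1i1 ?p2i1 ?p1i2 ?p2i2
            !mcomp1r !mcomp0r ?addr0 ?add0r.
Qed.

Lemma maxB_sub_le (L L' M : C) (m : Mor L M) (m' : Mor L' M) :
  maxB PB m -> maxB PB m' -> sub_le m m'.
Proof.
case=> _ [PL _] [_ [PL' m'_max]].
have [I [s [s_mono [PI [ms m's]]]]] := B_join m m' PL PL'.
exact: sub_le_trans ms (m'_max _ s s_mono PI m's).
Qed.

Lemma maxB_exists_unique (M : C) :
  noetherian C -> has_B_filtration PB M -> ~ is_zero M ->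
  exists (L : C) (m : Mor L M), maxB PB m /\ ~ is_zero L /\
    forall (L' : C) (m' : Mor L' M), maxB PB m' -> sub_le m m' /\ sub_le m' m.
Proof.
move=> noeth M_filt M_nz.
have [N0 [n0 [n0_mono [PN0 N0_nz]]]] := B_filtration_nonzero_sub M_filt M_nz.
have [L [m [m_max [u mu]]]] := maxB_exists noeth n0_mono PN0.
exists L, m; split=> //; split=> [L0 | L' m' m'_max]; last by split; apply: maxB_sub_le.
apply/N0_nz/(mono_eq0_zero n0_mono).
by rewrite -mu (mor_to_zero u L0) mcomp0r.
Qed.

Lemma maxB_annihilated_zero (Y L M N : C) (f : Mor M Y) (m : Mor L M) (j : Mor N M) :
  maxB PB m -> mono (mcomp f m) -> mono j -> PB N -> mcomp f j = 0 -> is_zero N.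
Proof.
case=> m_mono [PL m_max] fm_mono j_mono PN fj0.
have [P [p1 [p2 [i1 [i2 P_bip]]]]] := has_biproducts L N.
case: (P_bip) => p1i1 [p2i2 [p1i2 [p2i1 sum_id]]].
pose h := mcomp m p1 + mcomp j p2.
have hi1 : mcomp h i1 = m by rewrite mcompDl -!mcompA p1i1 p2i1 mcomp1r mcomp0r addr0.
have hi2 : mcomp h i2 = j by rewrite mcompDl -!mcompA p1i2 p2i2 mcomp1r mcomp0r add0r.
have fh : mcomp f h = mcomp (mcomp f m) p1.
  by rewrite mcompDr !mcompA fj0 mcomp0l addr0.
have h_mono : mono h.
  apply/monoP=> X g hg0.
  have p1g0 : mcomp p1 g = 0.
    by apply: mono_eq0 fm_mono _; rewrite mcompA -fh -mcompA hg0 mcomp0r.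
  have p2g0 : mcomp p2 g = 0.
    by apply: mono_eq0 j_mono _; move: hg0; rewrite mcompDl -!mcompA p1g0 mcomp0r add0r.
  by rewrite -(mcomp1l g) -sum_id mcompDl -!mcompA p1g0 p2g0 !mcomp0r addr0.
have [u mu] := m_max _ h h_mono (B_biproduct P_bip PL PN) (ex_intro _ i1 hi1).
have ui2 : mcomp u i2 = 0.
  by apply: mono_eq0 fm_mono _; rewrite -mcompA (mcompA i2 u m) mu hi2 fj0.
by apply: mono_eq0_zero j_mono _; rewrite -hi2 -mu -mcompA ui2 mcomp0r.
Qed.

Variables (M L P S : C) (phi : Mor M (dobj d M)) (m : Mor L M) (k : Mor P M).
Variables (a : Mor S L) (b : Mor S P).
Hypothesis m_max : maxB PB m.
Hypothesis k_perp : is_kernel (mcomp (dhom d m) phi) k.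
Hypothesis S_meet : is_pullback m k a b.

Lemma meet_perp_zero_B : has_B_filtration PB P -> is_iso phi -> is_zero S -> PB M.
Proof.
move=> P_filt phi_iso S0.
have fm_mono := pullback_kernel_zero_mono k_perp S_meet S0.
have P0 : is_zero P.
  apply: NNPP => P_nz; have [N [x [x_mono [PN N_nz]]]] := B_filtration_nonzero_sub P_filt P_nz.
  apply/N_nz/(maxB_annihilated_zero m_max fm_mono (mono_comp (kernel_mono k_perp) x_mono) PN).
  by rewrite mcompA k_perp.1 mcomp0l.
have dm_mono := mono_comp_iso phi_iso (kernel_zero_mono k_perp P0).
by case: m_max => _ [PL _]; apply: B_quotient (dual_mono_epi dm_mono) PL.
Qed.

Lemma B_meet_perp_zero : mono phi -> PB M -> is_zero S.
Proof.
move=> phi_mono PM; case: m_max => m_mono [_ m_above].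
have [u mu] := m_above _ (idm M) (@mono_idm M) PM (ex_intro _ m (mcomp1l m)).
have f_mono := mono_comp (split_epi_dhom_mono mu) phi_mono.
apply: pullback_zero m_mono _ S_meet; apply: mono_eq0_zero (kernel_mono k_perp) _.
exact: mono_eq0 f_mono k_perp.1.
Qed.

Lemma meet_perp_zero_iff_B :
  has_B_filtration PB P -> is_iso phi -> is_zero S <-> PB M.
Proof.
move=> P_filt phi_iso; split; first exact: meet_perp_zero_B.
exact: B_meet_perp_zero (iso_mono phi_iso).
Qed.

End Abelian.

End BSubobjects.

End Duality.

End Preadditive.

Unset Implicit Arguments.
Theorem lemma2p5 (C : precat) (d : duality C) (PB : C -> Prop) :
  abelian C -> is_duality d -> two_invertible C -> B_closed d PB ->
  (forall N : C, has_B_filtration PB N) -> noetherian C ->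
  (* (1) *)
  (forall M : C, ~ is_zero M ->
     exists (L : C) (m : Mor L M),
       maxB PB m /\ ~ is_zero L /\
       forall (L' : C) (m' : Mor L' M), maxB PB m' -> sub_le m m' /\ sub_le m' m) /\
  (* (2) *)
  (forall (M : C) (phi : Mor M (dobj d M)), hermitian_space phi ->
     forall (L : C) (m : Mor L M), maxB PB m ->
     forall (P : C) (k : Mor P M), is_kernel (mcomp (dhom d m) phi) k ->
     forall (S : C) (a : Mor S L) (b : Mor S P), is_pullback m k a b ->
       (is_zero S <-> PB M)).
Proof.
move=> [pre [_ [biprods [kers [cokers [monos_kernels _]]]]]] dual _ PBcl filt noeth.
split=> [M M_nz | M phi [phi_iso _] L m m_max P k k_perp S a b S_meet].
  exact: (maxB_exists_unique pre PBcl kers cokers monos_kernels biprods noeth (filt M) M_nz).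
exact: (meet_perp_zero_iff_B pre dual PBcl cokers biprods m_max k_perp S_meet (filt P)
  phi_iso).
Qed.
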